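(* There exists a constant $C>0$ such that for every sufficiently large $n$ and any two $n$-vertex $3$-uniform generalised hedgehogs $H,H'$ we have \[R(H,H')\le C n^{3/2}.\]
   Context: A $3$-graph is a $3$-uniform hypergraph. For $3$-graphs $G,H$, the ($2$-colour) Ramsey number $R(G,H)$ is the least $N$ such that every colouring of the edges of the complete $3$-graph on $N$ vertices with red and blue contains a blue copy of $G$ or a red copy of $H$. A (generalised) hedgehog is a $3$-graph on vertex set $B\sqcup S$ ($B$ the body, $S$ the spikes) in which every edge consists of one spike and two body vertices, and every spike lies in exactly one edge (different spikes may be attached to the same pair of body vertices, and some pairs of body vertices may have no spike). *)

From mathcomp Require Import all_boot.
From Stdlib Require Import Reals.

Set Implicit Arguments.
Unset Strict Implicit.
Unset Printing Implicit Defensive.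

Definition is_3graph (V : finType) (E : {set {set V}}) : Prop :=
  forall e, e \in E -> #|e| = 3.

(* A generalised hedgehog: a 3-graph whose vertex set splits into a body
   B = ~: S and spikes S, such that every edge contains exactly one spike
   (hence exactly two body vertices), and every spike lies in exactly one edge. *)
Definition is_hedgehog (V : finType) (E : {set {set V}}) : Prop :=
  is_3graph E /\
  exists S : {set V},
    (forall e, e \in E -> #|e :&: S| = 1) /\
    (forall s, s \in S -> #|[set e in E | s \in e]| = 1).

Definition has_copy (V : finType) (E : {set {set V}}) (N : nat)
  (P : {set 'I_N} -> bool) : Prop :=
  exists f : V -> 'I_N, injective f /\ forall e, e \in E -> P (f @: e).

(* Every red/blue colouring of the triples of 'I_N (colour c t = true means
   blue) contains a blue copy of G or a red copy of H. *)
Definition ramsey_arrows (N : nat) (V1 : finType) (G : {set {set V1}})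
  (V2 : finType) (H : {set {set V2}}) : Prop :=
  forall c : {set 'I_N} -> bool,
    has_copy G c \/ has_copy H (fun t => ~~ c t).

(* R(G,H) <= x  (R(G,H) is the least N with ramsey_arrows N G H; the least
   such N is <= x iff some N <= x has the property). *)
Definition ramsey_le (V1 : finType) (G : {set {set V1}})
  (V2 : finType) (H : {set {set V2}}) (x : R) : Prop :=
  exists N : nat, (INR N <= x)%R /\ ramsey_arrows N G H.

From mathcomp Require Import all_boot zify.
From Stdlib Require Import Reals Lra.

Set Implicit Arguments.
Unset Strict Implicit.
Unset Printing Implicit Defensive.

(* Call a pair {x, y} of vertices of the coloured complete 3-graph blue-rich
   if at least n triples {x, y, z} are blue.  For each vertex x, either few
   (at most 2n) partners y make {x, y} blue-poor or few make it red-poor: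
   every triple {x, y, y'} with y blue-poor and y' red-poor is blue or red,
   and each y, resp. y', lies in fewer than n triples of that colour.  So in
   one colour, say blue, at least N/2 vertices have few blue-poor partners.
   The body pairs of a hedgehog on n vertices number at most n, so its shadow
   graph on the body is O(sqrt n)-degenerate and embeds greedily into those
   vertices with all its pairs blue-rich, as long as N/2 > n + O(sqrt n) 2n.
   Each spike is then placed in a blue triple over its pair, avoiding the
   fewer than n vertices already used. *)

Lemma card_bigcup_le (I T : finType) (A : {set I}) (F : I -> {set T}) :
  #|\bigcup_(i in A) F i| <= \sum_(i in A) #|F i|.
Proof.
elim/big_rec2: _ => [|i B k _ IH]; first by rewrite cards0.
by rewrite cardsU (leq_trans (leq_subr _ _)) // leq_add2l.
Qed.

Lemma card_setI_sum (T : finType) (A : {set T}) (p : pred T) :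
  #|[set a in A | p a]| = \sum_(a in A) p a.
Proof.
rewrite -sum1_card big_mkcond [RHS]big_mkcond /=.
by apply: eq_bigr => a _; rewrite inE; case: (a \in A); case: (p a).
Qed.

Lemma double_count (I J : finType) (A : {set I}) (B : {set J}) (r : I -> J -> bool) :
  \sum_(a in A) #|[set b in B | r a b]| = \sum_(b in B) #|[set a in A | r a b]|.
Proof.
under eq_bigr do rewrite card_setI_sum.
by rewrite exchange_big; apply: eq_bigr => b _; rewrite card_setI_sum.
Qed.

Lemma leq_sum_subset (I : finType) (A B : {set I}) (F : I -> nat) :
  A \subset B -> \sum_(i in A) F i <= \sum_(i in B) F i.
Proof.
move=> /subsetP AB; rewrite big_mkcond [X in _ <= X]big_mkcond leq_sum // => i _.
by case: ifP => // /AB ->.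
Qed.

Lemma exists_fresh (T : finType) (A B : {set T}) :
  #|A| < #|B| -> exists2 z, z \in B & z \notin A.
Proof.
move=> AB; apply/subsetPn; apply: contraTN AB => /subset_leq_card.
by rewrite leqNgt.
Qed.

Lemma set_ind_D1 (T : finType) (Q : {set T} -> Prop) :
  Q set0 -> (forall W, W != set0 -> (forall v, v \in W -> Q (W :\ v)) -> Q W) ->
  forall W, Q W.
Proof.
move=> Q0 QD1 W; elim: {W}_.+1 {-2}W (ltnSn #|W|) => // m IH W ltWm.
have [->|W0] := eqVneq W set0; first exact: Q0.
apply: (QD1 W W0) => v vW; apply: IH.
by move: ltWm; rewrite (cardsD1 v W) vW.
Qed.

Lemma inj_eta_with (V T : finType) (A : {set V}) (f : V -> T) (s : V) (z : T) :
  {in A :\ s &, injective f} -> z \notin f @: (A :\ s) ->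
  {in A &, injective [eta f with s |-> z]}.
Proof.
move=> finj zfresh x y xA yA /=.
have As u : u \in A -> u != s -> u \in A :\ s by rewrite !inE => -> ->.
case: (eqVneq x s) => [->|xs]; case: (eqVneq y s) => [->|ys] //.
- by move=> zfy; case/negP: zfresh; rewrite zfy imset_f // As.
- by move=> fxz; case/negP: zfresh; rewrite -fxz imset_f // As.
- by apply: finj; apply: As.
Qed.

Section Codegree.
Variable N : nat.
Implicit Types (P : {set 'I_N} -> bool) (x y : 'I_N).

Definition codeg_set P x y := [set z | (z != x) && (z != y) && P [set x; y; z]].
Definition rich P k x y := k <= #|codeg_set P x y|.
Definition poor P k x := [set y | (y != x) && ~~ rich P k x y].

Lemma codeg_setC P x y : codeg_set P x y = codeg_set P y x.
Proof.
by apply/setP => z; rewrite !inE (setUC [set x]) (andbC (z != x)).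
Qed.

Lemma richC P k : symmetric (rich P k).
Proof. by move=> x y; rewrite /rich codeg_setC. Qed.

Lemma sum_card_poor_pairs (c : {set 'I_N} -> bool) k x :
  \sum_(y in poor c k x) #|poor (fun t => ~~ c t) k x :\ y|
    <= (#|poor c k x| + #|poor (fun t => ~~ c t) k x|) * k.-1.
Proof.
set Pb := poor c k x; set Pr := poor _ k x.
pose r y y' := (y' != y) && ~~ c [set x; y; y'].
have blue_split y : #|Pr :\ y| = #|[set y' in Pr | (y' != y) && c [set x; y; y']]|
                                + #|[set y' in Pr | r y y']|.
  rewrite -(cardsID [set y' | c [set x; y; y']]); congr (_ + _); apply: eq_card => y'.
    by rewrite !inE; case: (c _) (y' != y) (y' != x) (rich _ _ _ _) => [] [] [] [].
  by rewrite !inE /r; case: (c _) (y' != y) (y' != x) (rich _ _ _ _) => [] [] [] [].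
have blue_le y : y \in Pb ->
    #|[set y' in Pr | (y' != y) && c [set x; y; y']]| <= k.-1.
  rewrite inE => /andP[_]; rewrite /rich -ltnNge => lt_k.
  rewrite -ltnS (ltn_predK lt_k) (leq_ltn_trans _ lt_k) // subset_leq_card //.
  by apply/subsetP => z; rewrite !inE => /andP[/andP[-> _] /andP[-> ->]].
have red_le y' : y' \in Pr -> #|[set y in Pb | r y y']| <= k.-1.
  rewrite inE => /andP[_]; rewrite /rich -ltnNge => lt_k.
  rewrite -ltnS (ltn_predK lt_k) (leq_ltn_trans _ lt_k) // subset_leq_card //.
  apply/subsetP => z; rewrite !inE /r => /andP[/andP[-> _] /andP[yz cz]].
  by rewrite eq_sym yz setUAC.
rewrite mulnDl (eq_bigr _ (fun y _ => blue_split y)) big_split /=.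
rewrite [X in _ + X <= _]double_count leq_add // -sum_nat_const.
  exact: leq_sum blue_le.
exact: leq_sum red_le.
Qed.

Lemma card_poor_le_either_colour (c : {set 'I_N} -> bool) k x : 0 < k ->
  #|poor c k x| <= 2 * k \/ #|poor (fun t => ~~ c t) k x| <= 2 * k.
Proof.
move=> k0; have := sum_card_poor_pairs c k x.
set Pb := poor c k x; set Pr := poor _ k x => pairs_le.
have pairs_ge : #|Pb| * #|Pr|.-1 <= \sum_(y in Pb) #|Pr :\ y|.
  rewrite -sum_nat_const leq_sum // => y _.
  by rewrite (cardsD1 y Pr); case: (y \in Pr); rewrite /= ?add0n ?leq_pred.
have := leq_trans pairs_ge pairs_le; clearbody Pb Pr.
move: #|Pb| #|Pr| => a [|b] /=; first lia.
case: k k0 {pairs_ge pairs_le} => // k _ /=; nia.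
Qed.

End Codegree.

Definition degenerate (V : finType) (adj : rel V) (B : {set V}) (d : nat) :=
  forall W : {set V}, W \subset B -> W != set0 ->
  exists2 v, v \in W & #|[set u in W | adj u v]| <= d.

Lemma degenerate_sum_deg (V : finType) (adj : rel V) (B : {set V}) (d : nat) :
  irreflexive adj ->
  \sum_(v in B) #|[set u in B | adj u v]| < d.+1 * d.+2 -> degenerate adj B d.
Proof.
move=> adj_irr sum_lt W WB W0.
apply/exists_inP; apply: contraTT sum_lt => /exists_inPn deg_gt.
have {}deg_gt v : v \in W -> d < #|[set u in W | adj u v]|.
  by move=> vW; rewrite ltnNge deg_gt.
have [v vW] := set0Pn _ W0.
have W_gt : d.+1 < #|W|.
  apply: leq_ltn_trans (deg_gt v vW) _.
  rewrite (cardsD1 v W) vW add1n ltnS subset_leq_card //.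
  apply/subsetP => u; rewrite !inE => /andP[-> uv]; rewrite andbT.
  by apply: contraTneq uv => ->; rewrite adj_irr.
rewrite -leqNgt (leq_trans (leq_mul (leqnn d.+1) W_gt)) // mulnC -sum_nat_const.
apply: leq_trans (_ : _ <= \sum_(v in W) #|[set u in W | adj u v]|) _.
  exact: leq_sum deg_gt.
apply: leq_trans (leq_sum_subset _ WB); rewrite leq_sum // => u _.
by apply/subset_leq_card/subsetP => w; rewrite !inE => /andP[/(subsetP WB) -> ->].
Qed.

Section DegenerateEmbedding.
Variables (V T : finType) (adj : rel V) (good : rel T).
Hypotheses (adj_irr : irreflexive adj) (adjC : symmetric adj) (goodC : symmetric good).
Variables (B : {set V}) (X : {set T}) (d D : nat).
Hypothesis B_degenerate : degenerate adj B d.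
Hypothesis X_few_bad : {in X, forall x, #|[set y | (y != x) && ~~ good x y]| <= D}.
Hypothesis X_large : #|B| + d * D < #|X|.

Definition good_embedding (W : {set V}) (f : V -> T) :=
  [/\ {in W &, injective f}, {in W, forall u, f u \in X} &
      {in W &, forall u v, adj u v -> good (f u) (f v)}].

Lemma good_embedding_extend (W : {set V}) (v : V) (f : V -> T) :
  W \subset B -> v \in W -> #|[set u in W | adj u v]| <= d ->
  good_embedding (W :\ v) f -> exists g, good_embedding W g.
Proof.
move=> WB vW deg_v [finj fX fgood].
set Nv := [set u in W | adj u v].
have NvWv : Nv \subset W :\ v.
  apply/subsetP => u; rewrite !inE => /andP[-> uv]; rewrite andbT.
  by apply: contraTneq uv => ->; rewrite adj_irr.
set F := f @: (W :\ v) :|: \bigcup_(u in Nv) [set y | (y != f u) && ~~ good (f u) y].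
have F_lt : #|F| < #|X|.
  apply: leq_ltn_trans X_large; apply: leq_trans (leq_card_setU _ _) _.
  apply: leq_add; first apply: leq_trans (leq_imset_card _ _) _.
    by rewrite subset_leq_card // (subset_trans (subD1set W v) WB).
  apply: leq_trans (card_bigcup_le _ _) _.
  apply: leq_trans (_ : \sum_(u in Nv) D <= _).
    by apply: leq_sum => u /(subsetP NvWv) uWv; apply: X_few_bad; apply: fX.
  by rewrite sum_nat_const leq_mul2r deg_v orbT.
have [w wX wF] := exists_fresh F_lt.
have w_fresh : w \notin f @: (W :\ v) by apply: contra wF; rewrite inE => ->.
have good_w u : u \in W -> adj u v -> good (f u) w.
  move=> uW uv; have uNv : u \in Nv by rewrite inE uW uv.
  have : w \notin [set y | (y != f u) && ~~ good (f u) y].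
    by apply: contra wF => wbad; rewrite inE; apply/orP; right; apply/bigcupP; exists u.
  rewrite inE negb_and !negbK => /orP[/eqP wfu|//].
  by case/negP: w_fresh; rewrite wfu imset_f // (subsetP NvWv).
exists [eta f with v |-> w]; split.
- exact: inj_eta_with.
- by move=> u uW /=; case: eqP => [//|/eqP uv]; apply: fX; rewrite !inE uv.
move=> x y xW yW /=.
case: (eqVneq x v) => [->|xv]; case: (eqVneq y v) => [->|yv].
- by rewrite adj_irr.
- by rewrite adjC goodC; apply: good_w.
- exact: good_w.
- by apply: fgood; rewrite !inE ?xv ?yv.
Qed.

Lemma degenerate_embedding : exists f, good_embedding B f.
Proof.
suff: forall W : {set V}, W \subset B -> exists f, good_embedding W f by apply.
have [x0 _] : exists x0, x0 \in X.
  by apply/card_gt0P; apply: leq_ltn_trans X_large.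
elim/set_ind_D1 => [_|W W0 IH WB]; first by exists (fun _ => x0); split=> ?; rewrite inE.
have [v vW deg_v] := B_degenerate WB W0.
have [f femb] := IH v vW (subset_trans (subD1set W v) WB).
exact: good_embedding_extend femb.
Qed.

End DegenerateEmbedding.

Section Hedgehog.
Variables (V : finType) (E : {set {set V}}) (S : {set V}).
Hypothesis E3 : forall e, e \in E -> #|e| = 3.
Hypothesis edge_spike : forall e, e \in E -> #|e :&: S| = 1.
Hypothesis spike_edge : forall s, s \in S -> #|[set e in E | s \in e]| = 1.

Lemma card_edge_body e : e \in E -> #|e :\: S| = 2.
Proof. by move=> eE; have := cardsID S e; rewrite (edge_spike eE) (E3 eE); lia. Qed.

Lemma edge_decomp e : e \in E -> exists a b s,
  [/\ a != b, a \notin S, b \notin S, s \in S & e = [set a; b; s]].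
Proof.
move=> eE; have /cards1P [s es] : #|e :&: S| == 1 by rewrite edge_spike.
have /cards2P [a [b [ab eab]]] : #|e :\: S| == 2 by rewrite card_edge_body.
have : s \in e :&: S by rewrite es inE.
have : a \in e :\: S by rewrite eab !inE eqxx.
have : b \in e :\: S by rewrite eab !inE eqxx orbT.
rewrite !inE => /andP[bS _] /andP[aS _] /andP[_ sS].
exists a, b, s; split => //.
by rewrite -(setID e S) es eab setUC.
Qed.

Lemma spike_uniq e x y : e \in E -> x \in e -> y \in e -> x \in S -> y \in S -> x = y.
Proof.
move=> eE xe ye xS yS; have /cards1P [t et] : #|e :&: S| == 1 by rewrite edge_spike.
have : x \in e :&: S by rewrite inE xe.
have : y \in e :&: S by rewrite inE ye.
by rewrite et !inE => /eqP-> /eqP->.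
Qed.

Lemma edge_of_spike s : s \in S ->
  exists2 e, e \in E & s \in e /\ forall e', e' \in E -> s \in e' -> e' = e.
Proof.
move=> sS; have /cards1P [e Es] : #|[set e in E | s \in e]| == 1 by rewrite spike_edge.
have : e \in [set e in E | s \in e] by rewrite Es inE.
rewrite inE => /andP[eE se]; exists e => //; split => // e' e'E se'.
by apply/set1P; rewrite -Es inE e'E.
Qed.

Definition shadow_adj (u v : V) := (u != v) && [exists e in E, (u \in e) && (v \in e)].

Lemma shadow_adj_irr : irreflexive shadow_adj.
Proof. by move=> u; rewrite /shadow_adj eqxx. Qed.

Lemma shadow_adjC : symmetric shadow_adj.
Proof.
move=> u v; rewrite /shadow_adj eq_sym; congr (_ && _).
by apply: eq_existsb => e; rewrite [(u \in e) && _]andbC.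
Qed.

Lemma card_body_nbhd_le_deg v : v \notin S ->
  #|[set u in ~: S | shadow_adj u v]| <= #|[set e in E | v \in e]|.
Proof.
move=> vS; set Ev := [set e in E | v \in e].
have nbhd_sub : [set u in ~: S | shadow_adj u v] \subset \bigcup_(e in Ev) (e :\: S :\ v).
  apply/subsetP => u; rewrite !inE => /and3P[uS uv /exists_inP[e eE /andP[ue ve]]].
  by apply/bigcupP; exists e; rewrite !inE ?uv ?uS ?ue ?eE.
apply: leq_trans (subset_leq_card nbhd_sub) _; apply: leq_trans (card_bigcup_le _ _) _.
rewrite -sum1_card leq_sum // => e; rewrite inE => /andP[eE ve].
by have := cardsD1 v (e :\: S); rewrite card_edge_body // !inE ve vS; lia.
Qed.

Lemma card_edges : #|E| = #|S|.
Proof.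
have := double_count E S (fun e a => a \in e).
rewrite (eq_bigr (fun _ => 1)) => [|e eE]; last first.
  by rewrite -(edge_spike eE); apply: eq_card => a; rewrite !inE andbC.
by rewrite (eq_bigr (fun _ => 1) (P := [in S])) ?sum1_card // => s /spike_edge.
Qed.

Lemma sum_body_deg : \sum_(v in ~: S) #|[set e in E | v \in e]| = 2 * #|S|.
Proof.
rewrite -double_count (eq_bigr (fun _ => 2)) => [|e eE].
  by rewrite sum_nat_const card_edges mulnC.
by rewrite -(card_edge_body eE); apply: eq_card => a; rewrite !inE andbC.
Qed.

Lemma body_degenerate d : 2 * #|S| < d.+1 * d.+2 -> degenerate shadow_adj (~: S) d.
Proof.
move=> S_small; apply: degenerate_sum_deg shadow_adj_irr _.
rewrite (leq_ltn_trans _ S_small) // -sum_body_deg leq_sum // => v.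
rewrite inE => vS; apply: leq_trans (card_body_nbhd_le_deg vS).
by apply/subset_leq_card/subsetP => u; rewrite !inE.
Qed.

Section SpikeEmbedding.
Variables (N k : nat) (P : {set 'I_N} -> bool) (f : V -> 'I_N).
Hypothesis f_inj : {in ~: S &, injective f}.
Hypothesis f_rich : {in ~: S &, forall u v, shadow_adj u v -> rich P k (f u) (f v)}.
Hypothesis k_large : #|V| <= k.

Definition spike_embedding (U : {set V}) (g : V -> 'I_N) :=
  [/\ {in ~: S, g =1 f}, {in ~: S :|: U &, injective g} &
      forall e s, e \in E -> s \in U -> s \in e -> P (g @: e)].

Lemma spike_embedding_extend (U : {set V}) (s : V) (g : V -> 'I_N) :
  U \subset S -> s \in U -> spike_embedding (U :\ s) g -> exists g', spike_embedding U g'.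
Proof.
move=> US sU [gf g_inj gP]; have sS := subsetP US s sU.
have [e eE [se e_uniq]] := edge_of_spike sS.
have [a [b [t [ab aS bS tS e_abt]]]] := edge_decomp eE.
have ts : t = s by apply: (spike_uniq eE) => //; rewrite e_abt !inE eqxx !orbT.
subst t.
have ab_rich : rich P k (g a) (g b).
  rewrite !gf ?inE //; apply: f_rich; rewrite ?inE //.
  by rewrite /shadow_adj ab; apply/exists_inP; exists e; rewrite // e_abt !inE !eqxx ?orbT.
set A := ~: S :|: U.
have A_s : A :\ s = ~: S :|: U :\ s.
  by apply/setP => x; rewrite !inE; case: eqP => // ->; rewrite sS.
have [z zP z_fresh] : exists2 z, z \in codeg_set P (g a) (g b) & z \notin g @: (A :\ s).
  apply: exists_fresh; apply: leq_ltn_trans (leq_imset_card _ _) _.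
  apply: leq_trans (leq_trans k_large ab_rich).
  by have := cardsD1 s A; have := max_card A; rewrite !inE sU orbT /=; lia.
have sa : a != s by apply: contraNneq aS => ->.
have sb : b != s by apply: contraNneq bS => ->.
exists [eta g with s |-> z]; split.
- by move=> x xS /=; rewrite ifN ?gf //; apply: contraTneq xS => ->; rewrite inE sS.
- by apply: inj_eta_with; rewrite // A_s.
move=> e' s' e'E s'U s'e'; case: (eqVneq s' s) => [s's|s's].
  rewrite (e_uniq e' e'E); last by rewrite -s's.
  rewrite e_abt !imsetU !imset_set1 /= eqxx (negbTE sa) (negbTE sb).
  by move: zP; rewrite inE => /andP[_].
have se' : s \notin e'.
  apply: contra s's => se'; apply/eqP; apply: (spike_uniq e'E) => //.
  exact: subsetP US s' s'U.
rewrite (@eq_in_imset _ _ _ g) => [|x xe /=].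
  by apply: (gP e' s') => //; rewrite !inE s's.
by rewrite ifN //; apply: contraNneq se' => <-.
Qed.

Lemma spike_embedding_exists : exists g, spike_embedding S g.
Proof.
suff: forall U : {set V}, U \subset S -> exists g, spike_embedding U g by apply.
elim/set_ind_D1 => [_|U U0 IH US].
  by exists f; split=> [//||e s _]; rewrite ?setU0 ?inE.
have [s sU] := set0Pn _ U0.
have [g gemb] := IH s sU (subset_trans (subD1set U s) US).
exact: spike_embedding_extend gemb.
Qed.

End SpikeEmbedding.

End Hedgehog.

Lemma hedgehog_copy (V : finType) (E : {set {set V}}) (N k D d : nat)
    (P : {set 'I_N} -> bool) (X : {set 'I_N}) :
  is_hedgehog E -> #|V| <= k -> {in X, forall x, #|poor P k x| <= D} ->
  #|V| + d * D < #|X| -> 2 * #|V| < d.+1 * d.+2 -> has_copy E P.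
Proof.
move=> [E3 [S [edge_spike spike_edge]]] k_large X_few_poor X_large d_large.
have body_deg : degenerate (shadow_adj E) (~: S) d.
  apply: body_degenerate edge_spike spike_edge _ _ => //.
  by apply: leq_ltn_trans d_large; rewrite leq_mul2l max_card orbT.
have body_small : #|~: S| + d * D < #|X|.
  by apply: leq_ltn_trans X_large; rewrite leq_add2r max_card.
have [f [f_inj _ f_rich]] := degenerate_embedding (shadow_adj_irr E) (shadow_adjC E)
  (@richC N P k) body_deg X_few_poor body_small.
have [g [_ g_inj g_spikes]] :=
  spike_embedding_exists E3 edge_spike spike_edge f_inj f_rich k_large.
exists g; split.
  by move=> x y; apply: g_inj; rewrite !inE orNb.
move=> e eE; have /cards1P [s es] : #|e :&: S| == 1 by rewrite edge_spike.
have : s \in e :&: S by rewrite es inE.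
by rewrite inE => /andP[se sS]; apply: (g_spikes e s).
Qed.

Lemma hedgehogs_arrow (n d : nat) (V1 V2 : finType) (H : {set {set V1}})
    (H' : {set {set V2}}) :
  0 < n -> #|V1| = n -> #|V2| = n -> is_hedgehog H -> is_hedgehog H' ->
  2 * n < d.+1 * d.+2 -> ramsey_arrows (2 * (n + d * (2 * n) + 1)) H H'.
Proof.
move=> n_gt0 V1n V2n hogH hogH' d_large c.
set K := n + d * (2 * n) + 1.
set Xb := [set x | #|poor c n x| <= 2 * n].
set Xr := [set x | #|poor (fun t => ~~ c t) n x| <= 2 * n].
have XbXr : 2 * K <= #|Xb| + #|Xr|.
  have cover : Xb :|: Xr = setT.
    apply/setP => x; rewrite !inE.
    by case: (card_poor_le_either_colour c x n_gt0) => ->; rewrite ?orbT.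
  by have [] := leq_card_setU Xb Xr; rewrite cover cardsT card_ord.
have [Xb_large|Xr_large] := leqP K #|Xb|.
  left; apply: (@hedgehog_copy _ _ _ n (2 * n) d _ Xb); rewrite ?V1n //.
    by move=> x; rewrite inE.
  by rewrite -addn1.
right; apply: (@hedgehog_copy _ _ _ n (2 * n) d _ Xr); rewrite ?V2n //.
  by move=> x; rewrite inE.
by move: XbXr Xr_large; move: #|Xb| #|Xr| => a b; rewrite /K; lia.
Qed.

Lemma le_pow_three_halves (n d : nat) : (1 <= n)%N -> (d * d <= 2 * n)%N ->
  (INR (2 * (n + d * (2 * n) + 1)) <= 10 * Rpower (INR n) (3 / 2))%R.
Proof.
move=> n1 dd.
have n_pos : (0 < INR n)%R by apply: lt_0_INR; apply/leP.
have n_ge1 : (1 <= INR n)%R by apply: (le_INR 1); apply/leP.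
have -> : (3 / 2 = 1 + / 2)%R by field.
rewrite Rpower_plus Rpower_1 // Rpower_sqrt //.
have sqrt_sq := sqrt_sqrt (INR n) (Rlt_le _ _ n_pos).
have sqrt_ge1 : (1 <= sqrt (INR n))%R by rewrite -sqrt_1; apply: sqrt_le_1_alt.
have dd_R : (INR d * INR d <= 2 * INR n)%R.
  by rewrite -mult_INR -[2%R]/(INR 2) -mult_INR; apply/le_INR/leP.
have d_ge0 := pos_INR d.
set s := sqrt (INR n) in sqrt_sq sqrt_ge1 *.
have d_le : (INR d <= 3 / 2 * s)%R by nra.
rewrite !mult_INR !plus_INR !mult_INR /=; nra.
Qed.

Theorem theorem1p2 :
  exists C : R, (0 < C)%R /\
  exists n0 : nat, forall n : nat, (n0 <= n)%N ->
  forall (V1 V2 : finType) (H : {set {set V1}}) (H' : {set {set V2}}),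
    #|V1| = n -> #|V2| = n -> is_hedgehog H -> is_hedgehog H' ->
    ramsey_le H H' (C * Rpower (INR n) (3 / 2))%R.
Proof.
exists 10%R; split; first lra.
exists 1%N => n n_gt0 V1 V2 H H' V1n V2n hogH hogH'.
pose d := Nat.sqrt (2 * n).
have [/leP d_le /ltP d_gt] := Nat.sqrt_spec (2 * n) (Nat.le_0_l _).
exists (2 * (n + d * (2 * n) + 1))%N; split; first exact: le_pow_three_halves.
apply: hedgehogs_arrow => //; apply: leq_trans d_gt _.
by rewrite multE -/d leq_mul2l ltnW ?orbT.
Qed.
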